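(* Let $q$ be an $\varepsilon$-LDP cap-based mechanism from $\mathcal{X}$ to $\mathcal{Z}$, let $\mathbf{x}\in\mathcal{X}$, let $p$ be the uniform distribution on $\mathcal{Z}$, and let $\mathbf{z}_1,\dots,\mathbf{z}_N$ be $N$ i.i.d. candidates from $p$, with $\theta$ the fraction of candidates in $\mathsf{Cap}_{\mathbf{x}}$. Let $\rho\in(0,1)$ be such that $N=\frac{2(e^\varepsilon-1)^2}{\rho^2}\ln\frac2\rho$. Then \[ \mathbb{E}_\theta\Big[D_{\mathrm{KL}}\big(\pi^{\mathrm{mrc}}_{\mathbf{x},\theta}\,\big\|\,\pi^{\mathrm{mmrc}}_{\mathbf{x},\theta}\big)\Big]\le\rho\,\log e\,(1+\varepsilon). \]
   Context: $\log$ is base 2 and KL divergence is in bits. $\varepsilon$-LDP: $q(\mathbf{z}\mid\mathbf{x})\le e^\varepsilon q(\mathbf{z}\mid\mathbf{x}')$ for all $\mathbf{x},\mathbf{x}',\mathbf{z}$. Cap-based: $q(\mathbf{z}\mid\mathbf{x})=c_1$ if $\mathbf{z}\in\mathsf{Cap}_{\mathbf{x}}$, $=c_2$ otherwise, with constants $c_1\ge c_2$ independent of $\mathbf{x},\mathbf{z}$, and $\mathsf{Cap}_{\mathbf{x}}\subseteq\mathcal{Z}$ such that $\bar\theta=\mathbb{P}_{\mathbf{z}\sim\mathrm{Unif}(\mathcal{Z})}(\mathbf{z}\in\mathsf{Cap}_{\mathbf{x}})$ is independent of $\mathbf{x}$ and $\ge c_2/(2c_1)$ (so $\mathbb{E}[\theta]=\bar\theta$).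 $\pi^{\mathrm{mrc}}_{\mathbf{x},\theta}(k)=\frac1N\frac{c_1}{\theta c_1+(1-\theta)c_2}$ if $\mathbf{z}_k\in\mathsf{Cap}_{\mathbf{x}}$ and $\frac1N\frac{c_2}{\theta c_1+(1-\theta)c_2}$ otherwise. With $t_u=\frac1N\frac{c_1}{\bar\theta c_1+(1-\bar\theta)c_2}$, $t_l=\frac1N\frac{c_2}{\bar\theta c_1+(1-\bar\theta)c_2}$: $\pi^{\mathrm{mmrc}}_{\mathbf{x},\theta}=\pi^{\mathrm{mrc}}_{\mathbf{x},\theta}$ if $\theta=\bar\theta$; if $\theta<\bar\theta$, $\pi^{\mathrm{mmrc}}(k)=t_u$ for cap candidates and $\frac{1-N\theta t_u}{N(1-\theta)}$ otherwise; if $\theta>\bar\theta$, $\pi^{\mathrm{mmrc}}(k)=t_l$ for non-cap candidates and $\frac{1-N(1-\theta)t_l}{N\theta}$ otherwise. *)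

From HB Require Import structures.
From mathcomp Require Import all_boot all_order all_algebra.
From mathcomp Require Import all_classical all_reals all_analysis.
Set Implicit Arguments. Unset Strict Implicit. Unset Printing Implicit Defensive.
Import Order.TTheory GRing.Theory Num.Theory.
Local Open Scope classical_set_scope.
Local Open Scope ring_scope.

Section Defs.
Variable R : realType.

Definition log2 (x : R) : R := ln x / ln 2.

Definition LDP (X Z : Type) (eps : R) (q : X -> Z -> R) : Prop :=
  forall x x' z, q x z <= expR eps * q x' z.

Definition cap_based (X Z : Type) (q : X -> Z -> R) (Cap : X -> set Z)
  (c1 c2 : R) : Prop :=
  c2 <= c1 /\ forall x z, q x z = if z \in Cap x then c1 else c2.

Definition KL (T : finType) (P Q : T -> R) : R :=
  \sum_(k : T) (if P k == 0 then 0 else P k * log2 (P k / Q k)).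

Variable N : nat.

(* A candidate pattern s : s k = true iff candidate z_k lies in Cap_x. *)
Definition pattern := {ffun 'I_N -> bool}.

Definition theta_of (s : pattern) : R := #|[pred k | s k]|%:R / N%:R.

(* law of the pattern when z_1..z_N are i.i.d. and P(z_k in Cap_x) = thbar *)
Definition pattern_prob (thbar : R) (s : pattern) : R :=
  \prod_(k < N) (if s k then thbar else 1 - thbar).

Variables (c1 c2 thbar : R).

Definition pi_mrc (s : pattern) (k : 'I_N) : R :=
  let th := theta_of s in
  N%:R^-1 * ((if s k then c1 else c2) / (th * c1 + (1 - th) * c2)).

Definition t_u : R := N%:R^-1 * (c1 / (thbar * c1 + (1 - thbar) * c2)).
Definition t_l : R := N%:R^-1 * (c2 / (thbar * c1 + (1 - thbar) * c2)).

Definition pi_mmrc (s : pattern) (k : 'I_N) : R :=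
  let th := theta_of s in
  if th == thbar then pi_mrc s k
  else if th < thbar then
    (if s k then t_u else (1 - N%:R * th * t_u) / (N%:R * (1 - th)))
  else
    (if s k then (1 - N%:R * (1 - th) * t_l) / (N%:R * th) else t_l).

Definition expected_KL : R :=
  \sum_(s : pattern) pattern_prob thbar s * KL (pi_mrc s) (pi_mmrc s).

End Defs.

From HB Require Import structures.
From mathcomp Require Import all_boot all_order all_algebra.
From mathcomp Require Import all_classical all_reals all_analysis.
From mathcomp Require Import ring lra.
Set Implicit Arguments.
Unset Strict Implicit.
Unset Printing Implicit Defensive.
Import Order.TTheory GRing.Theory Num.Theory.
Local Open Scope ring_scope.

(** For a fixed candidate pattern, [pi_mrc] and [pi_mmrc] differ on every
  candidate by a factor at most [1 + 2 (e^eps - 1) |theta - thbar|] (the lower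
  bound [thbar >= c2 / (2 c1)] keeps the renormalised entries of [pi_mmrc]
  away from zero), so their KL divergence is at most
  [2 (e^eps - 1) |theta - thbar| log e].  Averaging over patterns,
  [E |theta - thbar| <= (Var theta / delta + delta) / 2] with
  [Var theta = thbar (1 - thbar) / N <= 1 / (4 N)], and the choice
  [delta = rho / (2 (e^eps - 1))] together with the given [N] bounds the
  total by [rho log e]. *)

Section PatternLaw.
Variables (R : realType) (N : nat) (tb : R).

Lemma sum_pattern_prod (F : 'I_N -> bool -> R) :
  \sum_(s : pattern N) \prod_k F k (s k) = \prod_k (F k true + F k false).
Proof. by rewrite -bigA_distr_bigA; apply: eq_bigr => k _; rewrite big_bool. Qed.

Lemma sum_pattern_prob : \sum_(s : pattern N) pattern_prob tb s = 1.
Proof.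
rewrite (sum_pattern_prod (fun _ b => if b then tb else 1 - tb)).
by rewrite big1 // => k _; rewrite addrC subrK.
Qed.

Lemma pattern_prob_ge0 (s : pattern N) : 0 <= tb <= 1 -> 0 <= pattern_prob tb s.
Proof.
by move=> /andP[? ?]; apply: prodr_ge0 => k _; case: (s k); lra.
Qed.

Lemma theta_of_ge0 (s : pattern N) : 0 <= theta_of R s.
Proof. exact: divr_ge0. Qed.

Lemma theta_of_le1 (s : pattern N) : theta_of R s <= 1.
Proof.
rewrite /theta_of; have [->|N_neq0] := eqVneq (N%:R : R) 0.
  by rewrite invr0 mulr0.
rewrite ler_pdivrMr; last by rewrite lt0r N_neq0 ler0n.
rewrite mul1r ler_nat.
by rewrite -[leqRHS](card_ord N) max_card.
Qed.

Definition cap_dev (b : bool) : R := (if b then 1 else 0) - tb.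

Lemma pattern_covariance (k l : 'I_N) :
  \sum_(s : pattern N) pattern_prob tb s * (cap_dev (s k) * cap_dev (s l)) =
  if k == l then tb * (1 - tb) else 0.
Proof.
pose F i b := (if b then tb else 1 - tb) *
  (if i == k then cap_dev b else 1) * (if i == l then cap_dev b else 1).
have -> : \sum_(s : pattern N) pattern_prob tb s * (cap_dev (s k) * cap_dev (s l))
    = \sum_(s : pattern N) \prod_i F i (s i).
  apply: eq_bigr => s _; rewrite !big_split /= mulrA.
  by rewrite -!big_mkcond /= !big_pred1_eq.
rewrite sum_pattern_prod (bigD1 k) //= /F eqxx /cap_dev.
case: eqP => [<-|/eqP k_neq_l].
  by rewrite big1 => [|i /negbTE ->]; ring.
by ring.
Qed.

Hypothesis N_gt0 : (0 < N)%N.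

Lemma theta_of_subE (s : pattern N) :
  theta_of R s - tb = (\sum_k cap_dev (s k)) / N%:R.
Proof.
have N_neq0 : (N%:R : R) != 0 by rewrite pnatr_eq0 -lt0n.
rewrite sumrB -big_mkcond /= !sumr_const card_ord /theta_of.
by field.
Qed.

Lemma theta_of_variance :
  \sum_(s : pattern N) pattern_prob tb s * (theta_of R s - tb) ^+ 2
  = tb * (1 - tb) / N%:R.
Proof.
have N_neq0 : (N%:R : R) != 0 by rewrite pnatr_eq0 -lt0n.
have sq_expand (s : pattern N) : (theta_of R s - tb) ^+ 2 =
    (\sum_k \sum_l cap_dev (s k) * cap_dev (s l)) / N%:R ^+ 2.
  rewrite theta_of_subE expr_div_n expr2 mulr_suml; congr (_ / _).
  by apply: eq_bigr => k _; rewrite mulr_sumr.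
under eq_bigr => s _ do rewrite sq_expand mulrA mulr_sumr.
rewrite -mulr_suml exchange_big /=.
under eq_bigr => k _ do under eq_bigr => s _ do rewrite mulr_sumr.
under eq_bigr => k _ do rewrite exchange_big /=.
under eq_bigr => k _ do under eq_bigr => l _ do rewrite pattern_covariance.
under eq_bigr => k _ do rewrite -big_mkcond /= (big_pred1 k) //.
by rewrite sumr_const card_ord; field.
Qed.

End PatternLaw.

Section LogRatio.
Variables (R : realType) (a b e tb : R).

Definition cap_denom (th : R) : R := th * a + (1 - th) * b.

(* [N * pi_mrc] and [N * pi_mmrc] (see [pi_mrcE], [pi_mmrcE]) for [a = c1], [b = c2]. *)
Definition mrc_weight (th : R) (bb : bool) : R :=
  (if bb then a else b) / cap_denom th.

Definition mmrc_weight (th : R) (bb : bool) : R :=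
  if th == tb then mrc_weight th bb
  else if th < tb then
    (if bb then a / cap_denom tb else (1 - th * (a / cap_denom tb)) / (1 - th))
  else
    (if bb then (1 - (1 - th) * (b / cap_denom tb)) / th else b / cap_denom tb).

Lemma cap_denom_ge (th : R) : b <= a -> 0 <= th -> b <= cap_denom th.
Proof. by move=> b_le_a th_ge0; rewrite /cap_denom; nra. Qed.

Lemma cap_denom_ratio_le (th th' : R) : 0 < b -> b <= a -> a <= e * b ->
  0 <= th -> cap_denom th' / cap_denom th <= 1 + (e - 1) * `|th' - th|.
Proof.
move=> b_gt0 b_le_a a_le_eb th_ge0.
have Dth := cap_denom_ge b_le_a th_ge0.
rewrite ler_pdivrMr; last lra.
have diff : cap_denom th' - cap_denom th = (th' - th) * (a - b).
  by rewrite /cap_denom; ring.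
have diff_le : (th' - th) * (a - b) <= `|th' - th| * (a - b).
  by apply: ler_wpM2r; [lra | exact: ler_norm].
have spread_le : `|th' - th| * (a - b) <= `|th' - th| * ((e - 1) * cap_denom th).
  by apply: ler_wpM2l => //; nra.
lra.
Qed.

Lemma mmrc_ratio_below_noncap (th : R) : 0 < b -> b <= a -> tb <= 1 ->
  0 <= th -> th < tb ->
  (b / cap_denom th) / ((1 - th * (a / cap_denom tb)) / (1 - th)) <= 1.
Proof.
move=> b_gt0 b_le_a tb_le1 th_ge0 th_lt_tb.
have Dth_gt0 : 0 < cap_denom th by have := cap_denom_ge b_le_a th_ge0; lra.
have Dtb_gt0 : 0 < cap_denom tb.
  by have := cap_denom_ge b_le_a (ltW (le_lt_trans th_ge0 th_lt_tb)); lra.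
have G_gt0 : 0 < cap_denom tb - th * a by rewrite /cap_denom; nra.
have -> : (b / cap_denom th) / ((1 - th * (a / cap_denom tb)) / (1 - th))
    = b * (1 - th) * cap_denom tb / (cap_denom th * (cap_denom tb - th * a)).
  by field; rewrite !lt0r_neq0 //; lra.
rewrite ler_pdivrMr ?mulr_gt0 // mul1r -subr_ge0.
have -> : cap_denom th * (cap_denom tb - th * a) - b * (1 - th) * cap_denom tb
    = th * a * ((tb - th) * (a - b)) :> R by rewrite /cap_denom; ring.
by rewrite !mulr_ge0 //; lra.
Qed.

Lemma mmrc_ratio_above_cap (th : R) : 0 < b -> b <= a -> a <= e * b ->
  b / (2 * a) <= tb -> tb < th -> th <= 1 ->
  (a / cap_denom th) / ((1 - (1 - th) * (b / cap_denom tb)) / th)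
    <= 1 + 2 * (e - 1) * (th - tb).
Proof.
move=> b_gt0 b_le_a a_le_eb tb_ge tb_lt_th th_le1.
have a_gt0 : 0 < a by lra.
have tb_ge' : b <= 2 * a * tb by rewrite mulrC -ler_pdivrMr ?mulr_gt0.
have tb_ge0 : 0 <= tb by nra.
have Dth := cap_denom_ge b_le_a (le_trans tb_ge0 (ltW tb_lt_th)).
have Dtb := cap_denom_ge b_le_a tb_ge0.
set G := tb * a + (th - tb) * b.
(* This is where [b / (2 a) <= tb] is needed. *)
have G_ge : b <= 2 * G by rewrite /G; nra.
have GE : G = cap_denom tb - (1 - th) * b by rewrite /G /cap_denom; ring.
have -> : (a / cap_denom th) / ((1 - (1 - th) * (b / cap_denom tb)) / th)
    = a * th * cap_denom tb / (cap_denom th * G).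
  by rewrite GE; field; rewrite -GE !lt0r_neq0 //; lra.
rewrite ler_pdivrMr ?mulr_gt0 //; [|lra|lra].
have -> : a * th * cap_denom tb
    = cap_denom th * G + (th - tb) * ((a - b) * b * (1 - th)) :> R.
  by rewrite /G /cap_denom; ring.
have excess_le_bb : (a - b) * b * (1 - th) <= (e - 1) * (b * b).
  have : 0 <= (a - b) * b * th by rewrite !mulr_ge0 //; lra.
  have : (a - b) * b <= (e - 1) * b * b by apply: ler_wpM2r; lra.
  lra.
have bb_le : b * b <= cap_denom th * (2 * G) by apply: ler_pM; lra.
have excess_le : (a - b) * b * (1 - th) <= 2 * (e - 1) * (cap_denom th * G).
  have : (e - 1) * (b * b) <= (e - 1) * (cap_denom th * (2 * G)).
    by apply: ler_wpM2l => //; nra.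
  lra.
have th_tb : 0 <= th - tb by lra.
have := ler_wpM2l th_tb excess_le.
lra.
Qed.

Lemma mrc_mmrc_ratio_le (th : R) (bb : bool) : 0 < b -> b <= a -> a <= e * b ->
  b / (2 * a) <= tb -> tb <= 1 -> 0 <= th <= 1 ->
  mrc_weight th bb / mmrc_weight th bb <= 1 + 2 * (e - 1) * `|th - tb|.
Proof.
move=> b_gt0 b_le_a a_le_eb tb_ge tb_le1 /andP[th_ge0 th_le1].
have Dth := cap_denom_ge b_le_a th_ge0.
have L_ge0 : 0 <= (e - 1) * `|th - tb| by apply: mulr_ge0 => //; nra.
have w_neq0 : (if bb then a else b) != 0 by case: bb; rewrite lt0r_neq0 //; lra.
have common_num (w y z : R) : w != 0 -> (w / y) / (w / z) = z / y.
  by move=> w0; rewrite invf_div mulrC mulrA divfK.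
rewrite /mmrc_weight /mrc_weight; case: eqP => [_|/eqP th_neq_tb].
  rewrite divff; first lra.
  by rewrite mulf_neq0 // invr_eq0 lt0r_neq0 //; lra.
case: ltP => [th_lt_tb | tb_le_th].
  case: bb w_neq0 => w_neq0.
    rewrite common_num //.
    apply: le_trans (cap_denom_ratio_le tb b_gt0 b_le_a a_le_eb th_ge0) _.
    by rewrite distrC; lra.
  apply: le_trans (mmrc_ratio_below_noncap b_gt0 b_le_a tb_le1 th_ge0 th_lt_tb) _.
  lra.
have tb_lt_th : tb < th by rewrite lt_neqAle eq_sym th_neq_tb.
case: bb w_neq0 => w_neq0.
  by rewrite gtr0_norm ?subr_gt0 //; exact: mmrc_ratio_above_cap.
rewrite common_num //.
apply: le_trans (cap_denom_ratio_le tb b_gt0 b_le_a a_le_eb th_ge0) _.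
by rewrite distrC; lra.
Qed.

End LogRatio.

(* No positivity assumption on [x]: [ln] is [0] on nonpositive reals. *)
Lemma ln_le_of_le1D (R : realType) (x L : R) : 0 <= L -> x <= 1 + L -> ln x <= L.
Proof.
move=> L_ge0 x_le; have [x_le0|x_gt0] := lerP x 0; first by rewrite ln0.
have := @le_ln1Dx R (x - 1) ltac:(lra).
rewrite addrC subrK; lra.
Qed.

Lemma KL_le_of_ln_ratio_le (R : realType) (T : finType) (P Q : T -> R) (L : R) :
  (forall k, 0 <= P k) -> \sum_k P k = 1 ->
  (forall k, P k != 0 -> ln (P k / Q k) <= L) -> KL P Q <= L / ln 2.
Proof.
move=> P_ge0 P_sum1 ratio_le.
apply: (@le_trans _ _ (\sum_k P k * (L / ln 2))); last first.
  by rewrite -mulr_suml P_sum1 mul1r.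
apply: ler_sum => k _; case: eqP => [->|/eqP Pk_neq0]; first by rewrite mul0r.
apply: ler_wpM2l => //; apply: ler_wpM2r; last exact: ratio_le.
by rewrite invr_ge0 ln_ge0 // ler1n.
Qed.

Section MrcVersusMmrc.
Variables (R : realType) (N : nat) (c1 c2 tb e : R).
Hypothesis N_gt0 : (0 < N)%N.

Let N_neq0 : (N%:R : R) != 0.
Proof. by rewrite pnatr_eq0 -lt0n. Qed.

Lemma pi_mrcE (s : pattern N) (k : 'I_N) :
  pi_mrc c1 c2 s k = N%:R^-1 * mrc_weight c1 c2 (theta_of R s) (s k).
Proof. by []. Qed.

Lemma pi_mmrcE (s : pattern N) (k : 'I_N) :
  pi_mmrc c1 c2 tb s k = N%:R^-1 * mmrc_weight c1 c2 tb (theta_of R s) (s k).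
Proof.
rewrite /pi_mmrc /mmrc_weight /t_u /t_l /cap_denom; case: eqP => // _.
by case: ltP; case: (s k) => _ //; rewrite [N%:R * _ * _]mulrAC mulVKf // invfM; ring.
Qed.

Hypotheses (c2_gt0 : 0 < c2) (c2_le_c1 : c2 <= c1) (c1_le_ec2 : c1 <= e * c2).
Hypotheses (tb_ge : c2 / (2 * c1) <= tb) (tb_le1 : tb <= 1).

Let cap_denom_gt0 (s : pattern N) : 0 < cap_denom c1 c2 (theta_of R s).
Proof. exact: lt_le_trans c2_gt0 (cap_denom_ge c2_le_c1 (theta_of_ge0 R s)). Qed.

Lemma sum_pi_mrc (s : pattern N) : \sum_k pi_mrc c1 c2 s k = 1.
Proof.
have sum_w : \sum_k (if s k then c1 else c2) = N%:R * cap_denom c1 c2 (theta_of R s).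
  rewrite (eq_bigr (fun k => c2 + (if s k then c1 - c2 else 0))); last first.
    by move=> k _; case: (s k); ring.
  rewrite big_split -big_mkcond /= !sumr_const card_ord /cap_denom /theta_of.
  by field.
under eq_bigr do rewrite pi_mrcE.
rewrite -mulr_sumr -mulr_suml sum_w mulfK ?mulVf //.
exact: lt0r_neq0 (cap_denom_gt0 s).
Qed.

Lemma ln_pi_ratio_le (s : pattern N) (k : 'I_N) :
  ln (pi_mrc c1 c2 s k / pi_mmrc c1 c2 tb s k) <= 2 * (e - 1) * `|theta_of R s - tb|.
Proof.
have e_ge1 : 1 <= e by rewrite -(ler_pMl _ c2_gt0) (le_trans c2_le_c1).
rewrite pi_mrcE pi_mmrcE invfM invrK mulrACA mulVf // mul1r.
apply: ln_le_of_le1D; first by rewrite !mulr_ge0 ?subr_ge0.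
apply: mrc_mmrc_ratio_le => //.
by rewrite theta_of_ge0 theta_of_le1.
Qed.

Lemma KL_mrc_mmrc_le (s : pattern N) :
  KL (pi_mrc c1 c2 s) (pi_mmrc c1 c2 tb s) <= 2 * (e - 1) * `|theta_of R s - tb| / ln 2.
Proof.
apply: KL_le_of_ln_ratio_le => [k||k _]; [|exact: sum_pi_mrc|exact: ln_pi_ratio_le].
rewrite pi_mrcE mulr_ge0 ?invr_ge0 // divr_ge0 ?(ltW (cap_denom_gt0 s)) //.
by case: (s k); [exact: le_trans (ltW c2_gt0) c2_le_c1 | exact: ltW].
Qed.

Lemma expected_KL_le_mean_abs_dev : expected_KL N c1 c2 tb <=
  2 * (e - 1) / ln 2 * \sum_(s : pattern N) pattern_prob tb s * `|theta_of R s - tb|.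
Proof.
have tb01 : 0 <= tb <= 1.
  rewrite tb_le1 andbT (le_trans _ tb_ge) // divr_ge0 ?mulr_ge0 ?ltW //.
  exact: lt_le_trans c2_gt0 c2_le_c1.
rewrite /expected_KL mulr_sumr; apply: ler_sum => s _.
rewrite mulrCA; apply: ler_wpM2l; first exact: pattern_prob_ge0.
by rewrite mulrAC; exact: KL_mrc_mmrc_le.
Qed.

End MrcVersusMmrc.

Lemma mean_abs_le (R : realType) (I : finType) (w y : I -> R) (del : R) :
  0 < del -> (forall i, 0 <= w i) -> \sum_i w i = 1 ->
  \sum_i w i * `|y i| <= ((\sum_i w i * y i ^+ 2) / del + del) / 2.
Proof.
move=> del_gt0 w_ge0 w_sum1.
have amgm (u : R) : `|u| <= (u ^+ 2 / del + del) / 2.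
  rewrite -(real_normK (num_real u)) -subr_ge0.
  have -> : (`|u| ^+ 2 / del + del) / 2 - `|u| = (`|u| - del) ^+ 2 / (2 * del).
    by field; rewrite lt0r_neq0.
  by rewrite divr_ge0 ?sqr_ge0 ?mulr_ge0 ?ltW.
apply: (@le_trans _ _ (\sum_i w i * ((y i ^+ 2 / del + del) / 2))).
  by apply: ler_sum => i _; apply: ler_wpM2l.
rewrite (eq_bigr (fun i => w i * y i ^+ 2 / del / 2 + w i * del / 2)) => [|i _].
  by rewrite big_split /= -!mulr_suml w_sum1 mul1r -mulrDl.
by ring.
Qed.

Lemma mean_abs_theta_dev_le (R : realType) (N : nat) (tb del : R) :
  0 <= tb <= 1 -> 0 < del -> 1 / 4 <= N%:R * del ^+ 2 ->
  \sum_(s : pattern N) pattern_prob tb s * `|theta_of R s - tb| <= del.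
Proof.
move=> tb01 del_gt0 N_del.
have N_gt0 : (0 < N)%N.
  by rewrite lt0n; apply: contraTneq N_del => ->; rewrite mul0r; lra.
have N_pos : 0 < (N%:R : R) by rewrite ltr0n.
apply: le_trans (mean_abs_le (fun s => theta_of R s - tb) del_gt0
  (fun s => pattern_prob_ge0 s tb01) (sum_pattern_prob N tb)) _.
rewrite theta_of_variance //.
have [tb_ge0 tb_le1] := andP tb01.
have var_le : tb * (1 - tb) <= del ^+ 2 * N%:R by have := sqr_ge0 (2 * tb - 1); nra.
have : tb * (1 - tb) / N%:R / del <= del.
  by rewrite !ler_pdivrMr // -mulrA -expr2.
lra.
Qed.

Lemma half_le_ln_2_div (R : realType) (rho : R) : 0 < rho < 1 -> 1 / 2 <= ln (2 / rho).
Proof.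
move=> /andP[rho_gt0 rho_lt1].
rewrite -[2 / rho]invf_div lnV ?posrE ?divr_gt0 //.
have := @le_ln1Dx R (rho / 2 - 1) ltac:(lra).
by rewrite addrC subrK; lra.
Qed.

Lemma cap_based_LDP_le (R : realType) (X Z : Type) (eps : R) (q : X -> Z -> R)
  (Cap : X -> set Z) (c1 c2 : R) :
  LDP eps q -> cap_based q Cap c1 c2 ->
  (exists x1 x2 z, z \in Cap x1 /\ z \notin Cap x2) -> c1 <= expR eps * c2.
Proof.
move=> ldp [_ qE] [x1 [x2 [z [z_in z_notin]]]].
by have := ldp x1 x2 z; rewrite !qE z_in (negbTE z_notin).
Qed.

Lemma expected_KL_00 (R : realType) (N : nat) (tb : R) : expected_KL N 0 0 tb = 0.
Proof.
rewrite /expected_KL big1 // => s _; rewrite /KL big1 ?mulr0 // => k _.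
by rewrite /pi_mrc if_same mul0r mulr0 eqxx.
Qed.

Local Open Scope classical_set_scope.

Theorem lemma4 (R : realType) (X : Type) (d : measure_display)
  (Z : measurableType d) (p : probability Z R)
  (q : X -> Z -> R) (Cap : X -> set Z) (c1 c2 thbar eps rho : R) (N : nat)
  (x : X) :
  0 < eps ->
  LDP eps q ->
  cap_based q Cap c1 c2 ->
  (exists x1 x2 z, z \in Cap x1 /\ z \notin Cap x2) ->
  (forall x', measurable (Cap x')) ->
  (forall x', p (Cap x') = thbar%:E) ->
  c2 / (2 * c1) <= thbar ->
  0 < rho < 1 ->
  N%:R = 2 * (expR eps - 1) ^+ 2 / rho ^+ 2 * ln (2 / rho) ->
  expected_KL N c1 c2 thbar <= rho * log2 (expR 1) * (1 + eps).
Proof.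
move=> eps_gt0 ldp q_cap cap_sep Cap_meas pCap tb_ge rho01 NE.
have e_gt1 : 1 < expR eps by rewrite expR_gt1.
have c1_le := cap_based_LDP_le ldp q_cap cap_sep.
have c2_le_c1 : c2 <= c1 by case: q_cap.
have tb01 : 0 <= thbar <= 1.
  by rewrite -!lee_fin -(pCap x) measure_ge0 (probability_le1 _ (Cap_meas x)).
have [rho_gt0 _] := andP rho01.
have rhs_ge : rho / ln 2 <= rho * log2 (expR 1) * (1 + eps).
  by rewrite /log2 expRK mul1r ler_peMr ?divr_ge0 ?ln_ge0 ?ltW //; lra.
have [c2_le0|c2_gt0] := lerP c2 0.
  have [-> ->] : c1 = 0 /\ c2 = 0 by split; nra.
  by rewrite expected_KL_00 (le_trans _ rhs_ge) ?divr_ge0 ?ln_ge0 ?ltW //; lra.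
set del := rho / (2 * (expR eps - 1)).
have del_gt0 : 0 < del by rewrite divr_gt0 //; lra.
have N_del : 1 / 4 <= N%:R * del ^+ 2.
  have -> : N%:R * del ^+ 2 = ln (2 / rho) / 2.
    by rewrite NE /del; field; rewrite !lt0r_neq0 //; lra.
  by have := half_le_ln_2_div rho01; lra.
have N_gt0 : (0 < N)%N.
  by rewrite lt0n; apply: contraTneq N_del => ->; rewrite mul0r; lra.
apply: le_trans (expected_KL_le_mean_abs_dev N_gt0 c2_gt0 c2_le_c1 c1_le tb_ge
  _) _; first by case/andP: tb01.
apply: le_trans (ler_wpM2l _ (mean_abs_theta_dev_le tb01 del_gt0 N_del)) _.
  by rewrite !mulr_ge0 ?invr_ge0 ?ln_ge0 //; lra.
have -> : 2 * (expR eps - 1) / ln 2 * del = rho / ln 2.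
  by rewrite /del; field; rewrite !lt0r_neq0 ?ln_gt0 //; lra.
exact: rhs_ge.
Qed.
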